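(* Let $n\geq3$ and let $S_n$ act on $V=\mathbb{C}^n$ by its natural permutation representation. The subspace of $(H^{2,1}\oplus H^{2,0})^{S_n}$ consisting of elements supported only on the identity is one-dimensional, with basis $\sum_{1\leq i<j\leq n}(e_i-e_j)\otimes e_i^*\wedge e_j^*\otimes 1$.
   Context: $S_n$ acts by $\sigma e_i=e_{\sigma(i)}$; $e_i^*$ is the dual basis. For $g\in S_n$, let $V^g$ be its fixed space, $(V^g)^\perp$ its orthogonal complement (standard bilinear form), $c_g=\operatorname{codim}V^g$; identify $(V^g)^*$ with functionals vanishing on $(V^g)^\perp$ and $((V^g)^* )^\perp$ with functionals vanishing on $V^g$. Set $H^{2,d}_g=S^d(V^g)\otimes\bigwedge^{2-c_g}(V^g)^*\otimes\bigwedge^{c_g}((V^g)^* )^\perp\otimes\mathbb{C}g\subseteq S^d(V)\otimes\bigwedge^2V^*\otimes\mathbb{C}g$ (zero if $2-c_g<0$), and $H^{2,d}=\bigoplus_gH^{2,d}_g$, with $S_n$ acting diagonally ($h\cdot(f\otimes\omega\otimes g)=hf\otimes h\omega\otimes hgh^{-1}$). An element is supported only on the identity if all its components for $g\neq1$ vanish. (Note $H^{2,d}_1=S^d(V)\otimes\bigwedge^2V^*\otimes\mathbb{C}1$.) *)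

(* Scalars: algC (algebraic complex numbers, standing for C). *)
From HB Require Import structures.
From mathcomp Require Import all_boot all_order all_algebra all_fingroup all_field.

Set Implicit Arguments.
Unset Strict Implicit.
Unset Printing Implicit Defensive.

Import GRing.Theory Num.Theory.
Local Open Scope ring_scope.

(* V = C^n with basis e_i; a vector is its coordinate function.
   A functional alpha in V^* is recorded by alpha k = alpha(e_k).
   A bilinear form omega on V is recorded by omega k l = omega(e_k, e_l);
   Lambda^2 V^* is the space of alternating forms, with
   (alpha /\ beta)(u,v) = alpha(u) beta(v) - alpha(v) beta(u).
   An element of V (x) Lambda^2 V^* is recorded by t k l p = coefficient of
   e_k (x) (form with value at (e_l,e_p)). *)
Definition vec (n : nat) := 'I_n -> algC.
Definition form2 (n : nat) := 'I_n -> 'I_n -> algC.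
Definition ten (n : nat) := 'I_n -> 'I_n -> 'I_n -> algC.

Definition basis_vec (n : nat) (i : 'I_n) : vec n := fun k => (k == i)%:R.
Definition dual_basis (n : nat) (i : 'I_n) : vec n := fun k => (k == i)%:R.
Definition vsub (n : nat) (u v : vec n) : vec n := fun k => u k - v k.
Definition wedge (n : nat) (a b : vec n) : form2 n :=
  fun k l => a k * b l - a l * b k.
Definition tens (n : nat) (v : vec n) (w : form2 n) : ten n :=
  fun k l p => v k * w l p.

Definition bil (n : nat) (u v : vec n) : algC := \sum_(i < n) u i * v i.

(* S_n acts by sigma e_i = e_{sigma i}, i.e. (sigma v)(sigma i) = v i. *)
Definition fixed (n : nat) (g : 'S_n) (v : vec n) : Prop :=
  forall i, v (g i) = v i.
Definition fixperp (n : nat) (g : 'S_n) (u : vec n) : Prop :=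
  forall v, fixed g v -> bil u v = 0.
(* (V^g)^* = functionals vanishing on (V^g)^perp *)
Definition fixdual (n : nat) (g : 'S_n) (a : vec n) : Prop :=
  forall u, fixperp g u -> bil a u = 0.
(* ((V^g)^* )^perp = functionals vanishing on V^g *)
Definition fixdualperp (n : nat) (g : 'S_n) (a : vec n) : Prop :=
  forall v, fixed g v -> bil a v = 0.

(* c_g = codim V^g; V^g is the row kernel of (perm_mx g - 1)
   (row vectors: e_i *m perm_mx g = e_(g i)). *)
Definition codim_fix (n : nat) (g : 'S_n) : nat :=
  (n - \rank (kermx (perm_mx g - 1%:M : 'M[algC]_n)))%N.

(* Pure generators of Lambda^{2-c}(V^g)^* (x) Lambda^c ((V^g)^* )^perp
   inside Lambda^2 V^*: a /\ b with the 2-c first factors in (V^g)^* and the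
   c last ones in ((V^g)^* )^perp; no generator (zero space) if c > 2. *)
Definition wedge_ok (n : nat) (g : 'S_n) (a b : vec n) : Prop :=
  match codim_fix g with
  | 0 => fixdual g a /\ fixdual g b
  | 1 => fixdual g a /\ fixdualperp g b
  | 2 => fixdualperp g a /\ fixdualperp g b
  | _ => False
  end.

(* H^{2,1}_g = S^1(V^g) (x) Lambda^{2-c_g}(V^g)^* (x) Lambda^{c_g}((V^g)^* )^perp,
   as a subspace of V (x) Lambda^2 V^*: the span of the pure tensors. *)
Definition inH21g (n : nat) (g : 'S_n) (t : ten n) : Prop :=
  exists (m : nat) (v a b : 'I_m -> vec n),
    (forall r, fixed g (v r) /\ wedge_ok g (a r) (b r)) /\
    forall k l p, t k l p = \sum_(r < m) tens (v r) (wedge (a r) (b r)) k l p.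

(* H^{2,0}_g = S^0(V^g) (x) ... , as a subspace of Lambda^2 V^*. *)
Definition inH20g (n : nat) (g : 'S_n) (t : form2 n) : Prop :=
  exists (m : nat) (a b : 'I_m -> vec n),
    (forall r, wedge_ok g (a r) (b r)) /\
    forall k l, t k l = \sum_(r < m) wedge (a r) (b r) k l.

(* Elements of the ambient spaces  (+)_g S^d(V) (x) Lambda^2 V^* (x) C g
   are functions g |-> component at g. *)
Definition amb21 (n : nat) := 'S_n -> ten n.
Definition amb20 (n : nat) := 'S_n -> form2 n.

(* Diagonal action h.(f (x) w (x) g) = hf (x) hw (x) hgh^{-1};
   the paper's h g h^{-1} (function composition) is (h^-1 * g * h)%g in
   MathComp, where (s * t) x = t (s x).  Invariance: x(hgh^-1) = h.(x g),
   and (h.t)(k,l,p) = t(h^-1 k, h^-1 l, h^-1 p). *)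
Definition inv21 (n : nat) (x : amb21 n) : Prop :=
  forall (h g : 'S_n) k l p,
    x (h^-1 * g * h)%g k l p = x g ((h^-1)%g k) ((h^-1)%g l) ((h^-1)%g p).
Definition inv20 (n : nat) (x : amb20 n) : Prop :=
  forall (h g : 'S_n) k l,
    x (h^-1 * g * h)%g k l = x g ((h^-1)%g k) ((h^-1)%g l).

Definition id_supported_invariant (n : nat) (x1 : amb21 n) (x0 : amb20 n) : Prop :=
  [/\ forall g, inH21g g (x1 g),
      forall g, inH20g g (x0 g),
      inv21 x1, inv20 x0 &
      forall g : 'S_n, g != 1%g ->
        (forall k l p, x1 g k l p = 0) /\ (forall k l, x0 g k l = 0)].

Definition w21 (n : nat) : amb21 n :=
  fun g k l p =>
    if g == 1%g then
      \sum_(i < n) \sum_(j < n | (i < j)%N)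
         tens (vsub (basis_vec i) (basis_vec j))
              (wedge (dual_basis i) (dual_basis j)) k l p
    else 0.
Definition w20 (n : nat) : amb20 n := fun _ _ _ => 0.

(* At the identity V^1 = V has codimension 0, so H^{2,1}_1 and H^{2,0}_1 are the whole of
   V (x) Lambda^2 V^* and Lambda^2 V^*, and an invariant element supported on 1 is just an
   S_n-invariant tensor there.  Such a tensor t(k,l,p) is constant on S_n-orbits of index
   triples and alternating in (l,p).  The transposition (l p) fixes every k outside {l,p}
   and swaps the last two slots, so it forces t(k,l,p) = 0 unless k is l or p; in the
   same way it kills every invariant of Lambda^2 V^*.  The two surviving orbits k = l <> p
   and k = p <> l carry opposite values, which is the coordinate expression
   delta_kl - delta_kp of sum_{i<j} (e_i - e_j) (x) e_i^* /\ e_j^*. *)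
From HB Require Import structures.
From mathcomp Require Import all_boot all_order all_algebra all_fingroup all_field.
From mathcomp Require Import ring.
Import GRing.Theory Num.Theory.
Local Open Scope ring_scope.

Lemma sum_kronecker {R : pzSemiRingType} {I : finType} (F : I -> R) (l : I) :
  \sum_i (l == i)%:R * F i = F l.
Proof.
rewrite (bigD1 l) //= eqxx mul1r big1 ?addr0 // => i ne_il.
by rewrite eq_sym (negPf ne_il) mul0r.
Qed.

Lemma sum_kronecker_lt {R : pzSemiRingType} {n : nat} (F : 'I_n -> 'I_n -> R)
    (l p : 'I_n) :
  \sum_(i : 'I_n) \sum_(j : 'I_n | (i < j)%N) (l == i)%:R * ((p == j)%:R * F i j)
  = (l < p)%:R * F l p.
Proof.
rewrite -(sum_kronecker (fun i : 'I_n => (i < p)%:R * F i p)); apply: eq_bigr => i _.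
rewrite -mulr_sumr big_mkcond /= -(sum_kronecker (fun j : 'I_n => (i < j)%:R * F i j) p).
by congr (_ * _); apply: eq_bigr => j _; case: (i < j)%N; rewrite ?mul1r ?mul0r ?mulr0.
Qed.

Lemma exists_perm_pair {T : finType} {x y x' y' : T} :
  x != y -> x' != y' -> exists s : {perm T}, s x = x' /\ s y = y'.
Proof.
move=> ne_xy ne_x'y'; pose t := tperm x x'.
exists (t * tperm (t y) y')%g; rewrite !permM tpermL tpermL; split=> //.
apply: tpermD; last by rewrite eq_sym.
by rewrite -[X in _ != X](tpermL x x') (inj_eq perm_inj) eq_sym.
Qed.

Section InvariantAlternating.
Context {R : numDomainType} {n : nat}.

Section Forms.
Context {w : 'I_n -> 'I_n -> R}.
Hypothesis w_alt : forall k l, w k l = - w l k.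
Hypothesis w_inv : forall (s : 'S_n) k l, w (s k) (s l) = w k l.

Lemma invariant_alternating_form_eq0 k l : w k l = 0.
Proof.
apply/eqP; rewrite -eqNr -w_alt.
by rewrite -(w_inv (tperm k l) l k) tpermR tpermL.
Qed.

End Forms.

Section Tensors.
Context {t : 'I_n -> 'I_n -> 'I_n -> R}.
Hypothesis t_alt : forall k l p, t k l p = - t k p l.
Hypothesis t_inv : forall (s : 'S_n) k l p, t (s k) (s l) (s p) = t k l p.

Lemma invariant_alternating_tensor_diag k l : t k l l = 0.
Proof. by apply/eqP; rewrite -eqNr -t_alt. Qed.

Lemma invariant_alternating_tensor_eq0 k l p : k != l -> k != p -> t k l p = 0.
Proof.
move=> ne_kl ne_kp; apply/eqP; rewrite -eqNr -t_alt.
by rewrite -(t_inv (tperm l p) k p l) tpermR tpermL tpermD // eq_sym.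
Qed.

Lemma invariant_alternating_tensor_pair {i0 i1 k p : 'I_n} :
  i0 != i1 -> k != p -> t k k p = t i0 i0 i1.
Proof.
move=> ne_i01 ne_kp; have [s [<- <-]] := exists_perm_pair ne_kp ne_i01.
by rewrite t_inv.
Qed.

Lemma invariant_alternating_tensorE {i0 i1 : 'I_n} : i0 != i1 ->
  forall k l p, t k l p = t i0 i0 i1 * ((k == l)%:R - (k == p)%:R).
Proof.
move=> ne_i01 k l p.
have [<- | ne_lp] := eqVneq l p.
  by rewrite subrr mulr0 invariant_alternating_tensor_diag.
move: ne_lp; case: (eqVneq k l) => [<- ne_kp | ne_kl ne_lp].
  by rewrite (negPf ne_kp) subr0 mulr1 (invariant_alternating_tensor_pair ne_i01).
have [<- | ne_kp] := eqVneq k p.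
  by rewrite sub0r mulrN1 t_alt (invariant_alternating_tensor_pair ne_i01).
by rewrite subrr mulr0 invariant_alternating_tensor_eq0.
Qed.

End Tensors.
End InvariantAlternating.

Section SupportedOnIdentity.
Variable n : nat.

Lemma fixperp1 (u : vec n) : fixperp 1%g u -> forall i, u i = 0.
Proof.
move=> perp_u i; have := perp_u (basis_vec i) (fun j => congr1 (basis_vec i) (perm1 j)).
by rewrite /bil /basis_vec; under eq_bigr do rewrite mulrC eq_sym; rewrite sum_kronecker.
Qed.

Lemma fixdual1 (a : vec n) : fixdual 1%g a.
Proof. by move=> u /fixperp1 u0; rewrite /bil big1 // => i _; rewrite u0 mulr0. Qed.

Lemma codim_fix1 : codim_fix (1%g : 'S_n) = 0%N.
Proof. by rewrite /codim_fix perm_mx1 subrr mxrank_ker mxrank0 subn0 subnn. Qed.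

Lemma wedge_ok1 (a b : vec n) : wedge_ok 1%g a b.
Proof. by rewrite /wedge_ok codim_fix1; split; apply: fixdual1. Qed.

Lemma inH21g0 (g : 'S_n) (t : ten n) : (forall k l p, t k l p = 0) -> inH21g g t.
Proof.
move=> t0; exists 0%N, (fun _ _ => 0), (fun _ _ => 0), (fun _ _ => 0).
by split=> [[] | *]; rewrite ?big_ord0.
Qed.

Lemma inH20g0 (g : 'S_n) (t : form2 n) : (forall k l, t k l = 0) -> inH20g g t.
Proof.
by move=> t0; exists 0%N, (fun _ _ => 0), (fun _ _ => 0); split=> [[] | *]; rewrite ?big_ord0.
Qed.

Lemma inH21g_alt {g : 'S_n} {t : ten n} : inH21g g t -> forall k l p, t k l p = - t k p l.
Proof.
case=> m [v [a [b [_ tE]]]] k l p.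
by rewrite !tE -sumrN; apply: eq_bigr => r _; rewrite /tens /wedge; ring.
Qed.

Lemma inH20g_alt {g : 'S_n} {t : form2 n} : inH20g g t -> forall k l, t k l = - t l k.
Proof.
case=> m [a [b [_ tE]]] k l.
by rewrite !tE -sumrN; apply: eq_bigr => r _; rewrite /wedge; ring.
Qed.

Lemma inv21_1 {x : amb21 n} : inv21 x ->
  forall (s : 'S_n) k l p, x 1%g (s k) (s l) (s p) = x 1%g k l p.
Proof.
move=> x_inv s k l p; have := x_inv s 1%g (s k) (s l) (s p).
by rewrite mulg1 mulVg !permK.
Qed.

Lemma inv20_1 {x : amb20 n} : inv20 x ->
  forall (s : 'S_n) k l, x 1%g (s k) (s l) = x 1%g k l.
Proof.
move=> x_inv s k l; have := x_inv s 1%g (s k) (s l).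
by rewrite mulg1 mulVg !permK.
Qed.

Lemma w21E g k l p :
  @w21 n g k l p = if g == 1%g then (k == l)%:R - (k == p)%:R else 0.
Proof.
rewrite /w21; case: eqP => // _.
pose d (i j : 'I_n) : algC := (k == i)%:R - (k == j)%:R.
transitivity (\sum_(i : 'I_n) \sum_(j : 'I_n | (i < j)%N)
  ((l == i)%:R * ((p == j)%:R * d i j) - (p == i)%:R * ((l == j)%:R * d i j))).
  apply: eq_bigr => i _; apply: eq_bigr => j _.
  by rewrite /tens /vsub /basis_vec /wedge /dual_basis /d; ring.
under eq_bigr => i _ do rewrite sumrB.
rewrite sumrB !sum_kronecker_lt /d.
case: (ltngtP l p) => [_|_|/val_inj <-]; rewrite ?subrr //.
  by rewrite mul1r mul0r subr0.
by rewrite mul1r mul0r sub0r opprB.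
Qed.

Lemma inH21g_w21 : inH21g 1%g (@w21 n 1%g).
Proof.
exists n, (@basis_vec n), (@dual_basis n), (fun _ _ => 1); split.
  by move=> r; split; [move=> i; rewrite perm1 | exact: wedge_ok1].
move=> k l p; rewrite w21E eqxx; symmetry.
transitivity (\sum_(r : 'I_n) ((k == r)%:R * (l == r)%:R - (k == r)%:R * (p == r)%:R : algC)).
  by apply: eq_bigr => r _; rewrite /tens /basis_vec /wedge /dual_basis; ring.
by rewrite sumrB !sum_kronecker [l == k]eq_sym [p == k]eq_sym.
Qed.

Lemma w21_id_supported_invariant : id_supported_invariant (@w21 n) (@w20 n).
Proof.
split=> [g | g | h g k l p | // | g ne_g1].
- have [->|ne_g1] := eqVneq g 1%g; first exact: inH21g_w21.
  by apply: inH21g0 => k l p; rewrite w21E (negPf ne_g1).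
- exact: inH20g0.
- rewrite !w21E -mulgA -conjgE conjg_eq1; case: eqP => // _.
  by rewrite !(inj_eq perm_inj).
- by split=> *; rewrite ?w21E ?(negPf ne_g1).
Qed.

Lemma w21_neq0 (i0 i1 : 'I_n) : i0 != i1 -> @w21 n 1%g i0 i0 i1 != 0.
Proof. by move=> ne_i01; rewrite w21E !eqxx (negPf ne_i01) subr0 oner_neq0. Qed.

Lemma id_supported_invariant_scale_w21 (i0 i1 : 'I_n) (x1 : amb21 n) (x0 : amb20 n) :
  i0 != i1 -> id_supported_invariant x1 x0 ->
  (forall g k l p, x1 g k l p = x1 1%g i0 i0 i1 * @w21 n g k l p) /\
  (forall g k l, x0 g k l = x1 1%g i0 i0 i1 * @w20 n g k l).
Proof.
move=> ne_i01 [x1_H x0_H x1_inv x0_inv x_supp]; split=> [g k l p | g k l].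
- rewrite w21E; have [->|ne_g1] := eqVneq g 1%g; last by rewrite (x_supp g ne_g1).1 mulr0.
  exact: (invariant_alternating_tensorE (inH21g_alt (x1_H 1%g)) (inv21_1 x1_inv) ne_i01).
- rewrite /w20 mulr0; have [->|ne_g1] := eqVneq g 1%g; last by rewrite (x_supp g ne_g1).2.
  exact: (invariant_alternating_form_eq0 (inH20g_alt (x0_H 1%g)) (inv20_1 x0_inv)).
Qed.

End SupportedOnIdentity.

Theorem lemma4p4 (n : nat) (hn : (3 <= n)%N) :
  [/\ id_supported_invariant (@w21 n) (@w20 n),
      (exists (g : 'S_n) k l p, @w21 n g k l p != 0) &
      forall (x1 : amb21 n) (x0 : amb20 n),
        id_supported_invariant x1 x0 ->
        exists c : algC,
          (forall g k l p, x1 g k l p = c * @w21 n g k l p) /\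
          (forall g k l, x0 g k l = c * @w20 n g k l)].
Proof.
pose i0 : 'I_n := Ordinal (leq_trans (isT : (1 <= 3)%N) hn).
pose i1 : 'I_n := Ordinal (leq_trans (isT : (2 <= 3)%N) hn).
have ne_i01 : i0 != i1 by [].
split; first exact: w21_id_supported_invariant.
  by exists 1%g, i0, i0, i1; apply: w21_neq0.
move=> x1 x0 x_inv; exists (x1 1%g i0 i0 i1).
exact: id_supported_invariant_scale_w21.
Qed.
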